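(* For any integers $a,a'>1$, if $\mathrm{L}_a\cap\mathrm{L}_{a'}\neq\emptyset$ then $a\in\mathrm{L}_{a'}$ or $a'\in\mathrm{L}_a$. Consequently, either $\mathrm{L}_a\cap\mathrm{L}_{a'}=\emptyset$, or $\mathrm{L}_a\subset\mathrm{L}_{a'}$, or $\mathrm{L}_a\supset\mathrm{L}_{a'}$.
   Context: For an integer $a>1$ let $P(a)$ be its largest prime factor and $\mathrm{L}_a=\{ba: b\in\mathbb{N},\ \text{every prime } p\mid b \text{ satisfies } p\ge P(a)\}$. *)

From mathcomp Require Import all_boot.
Set Implicit Arguments. Unset Strict Implicit. Unset Printing Implicit Defensive.

Definition P (a : nat) : nat := max_pdiv a.

Definition L (a : nat) (n : nat) : Prop :=
  exists b : nat, 0 < b /\ n = b * a /\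
    (forall p : nat, prime p -> p %| b -> P a <= p).

From mathcomp Require Import all_boot.
From Stdlib Require Classical_Prop.

Set Implicit Arguments.
Unset Strict Implicit.
Unset Printing Implicit Defensive.

(* Write n = b a = b' a' with P(a) <= P(a') and p = P(a).  Below p the
   cofactors b, b' carry no prime, so a and a' have the same q-adic valuation
   there as n; above p, a has no prime at all.  Hence a | a' as soon as
   v_p(a) <= v_p(a'), which always holds if P(a) < P(a') because then p does
   not divide b'.  When a | a', the quotient a'/a divides b, so a' lies in L_a;
   and L is transitive, which gives the trichotomy. *)

Lemma dvdn_from_log m n :
  0 < m -> 0 < n -> (forall p, logn p m <= logn p n) -> m %| n.
Proof.
move=> m_gt0 n_gt0 le_mn.
have <- : gcdn m n = m.
  apply: eqn_from_log => // [|p]; first by rewrite gcdn_gt0 m_gt0.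
  by rewrite logn_gcd //; apply/minn_idPl.
exact: dvdn_gcdr.
Qed.

Lemma logn_gt_max_pdiv p n : max_pdiv n < p -> logn p n = 0.
Proof.
move=> lt_n_p; apply/eqP; rewrite -leqn0 leqNgt logn_gt0.
by apply: contraTN lt_n_p => p_n; rewrite -leqNgt max_pdiv_max.
Qed.

Lemma max_pdiv_dvdn m n : 0 < n -> m %| n -> max_pdiv m <= max_pdiv n.
Proof.
move=> n_gt0 m_n; have [m_gt1|] := ltnP 1 m.
  apply: max_pdiv_max; rewrite mem_primes max_pdiv_prime // n_gt0.
  exact: dvdn_trans (max_pdiv_dvd m) m_n.
by case: m m_n => [|[]] //; rewrite dvd0n => /eqP n0; rewrite n0 in n_gt0.
Qed.

Lemma logn_L a n q : 0 < a -> L a n -> q < P a -> logn q n = logn q a.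
Proof.
move=> a_gt0 [b [b_gt0 [-> Pb]]] lt_q_Pa.
rewrite lognM //; suff -> : logn q b = 0 by [].
apply/eqP; rewrite -leqn0 leqNgt logn_gt0 mem_primes b_gt0 /=.
by apply/negP => /andP[q_pr q_b]; move: (Pb q q_pr q_b); rewrite leqNgt lt_q_Pa.
Qed.

Lemma L_dvd a n : L a n -> a %| n.
Proof. by case=> b [_ [-> _]]; apply: dvdn_mull. Qed.

Lemma L_gt0 a n : 0 < a -> L a n -> 0 < n.
Proof. by move=> a_gt0 [b [b_gt0 [-> _]]]; rewrite muln_gt0 b_gt0. Qed.

Lemma L_trans a a' n : 0 < a -> L a a' -> L a' n -> L a n.
Proof.
move=> a_gt0 [c [c_gt0 [-> Pc]]] [b [b_gt0 [-> Pb]]].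
have le_Pa_Pca : P a <= P (c * a).
  by apply: max_pdiv_dvdn; [rewrite muln_gt0 c_gt0 | apply: dvdn_mull].
exists (b * c); split; first by rewrite muln_gt0 b_gt0.
split; first by rewrite mulnA.
move=> q q_pr; rewrite Euclid_dvdM // => /orP[q_b | q_c]; last exact: Pc.
exact: leq_trans le_Pa_Pca (Pb q q_pr q_b).
Qed.

Section CommonMultiple.

Variables a a' n : nat.
Hypotheses (a_gt0 : 0 < a) (a'_gt0 : 0 < a') (Lan : L a n) (La'n : L a' n).

Lemma dvdn_of_L_common :
  P a <= P a' -> logn (P a) a <= logn (P a) a' -> a %| a'.
Proof.
move=> le_Pa_Pa' le_log; apply: dvdn_from_log => // q.
case: (ltngtP q (P a)) => [lt_q_Pa | lt_Pa_q | -> //].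
  by rewrite -(logn_L a_gt0 Lan lt_q_Pa) (logn_L a'_gt0 La'n) // (leq_trans lt_q_Pa).
by rewrite logn_gt_max_pdiv.
Qed.

Lemma logn_max_pdiv_L_common :
  P a < P a' -> logn (P a) a <= logn (P a) a'.
Proof.
move=> lt_Pa_Pa'; rewrite -(logn_L a'_gt0 La'n lt_Pa_Pa').
exact: dvdn_leq_log (L_gt0 a_gt0 Lan) (L_dvd Lan).
Qed.

Lemma L_of_dvdn_common : a %| a' -> L a a'.
Proof.
move/dvdnP=> [c def_a']; move: Lan La'n; rewrite def_a'.
move=> [b [b_gt0 [-> Pb]]] [b' [_ [E _]]].
have def_b : b = b' * c by apply/eqP; rewrite -(eqn_pmul2r a_gt0) E mulnA.
exists c; split; last split => //.
  by move: a'_gt0; rewrite def_a' muln_gt0 => /andP[].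
by move=> q q_pr q_c; apply: Pb; rewrite // def_b dvdn_mull.
Qed.

End CommonMultiple.

Lemma dvdn_or_dvdn_of_L_common a a' n : 0 < a -> 0 < a' -> L a n -> L a' n ->
  P a <= P a' -> a %| a' \/ a' %| a.
Proof.
move=> a_gt0 a'_gt0 Lan La'n.
have dvd := dvdn_of_L_common a_gt0 a'_gt0 Lan La'n.
rewrite leq_eqVlt => /orP[/eqP eq_P | lt_P].
  have [le_log | /ltnW le_log] := leqP (logn (P a) a) (logn (P a) a').
    by left; apply: dvd (eq_leq eq_P) le_log.
  right; apply: (dvdn_of_L_common a'_gt0 a_gt0 La'n Lan (eq_leq (esym eq_P))).
  by rewrite -eq_P.
left; apply: dvd (ltnW lt_P) _.
exact: (logn_max_pdiv_L_common a_gt0 a'_gt0 Lan La'n lt_P).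
Qed.

Lemma L_common_comparable a a' n : 0 < a -> 0 < a' -> L a n -> L a' n -> L a' a \/ L a a'.
Proof.
move=> a_gt0 a'_gt0 Lan La'n.
have [a_a' | a'_a] : a %| a' \/ a' %| a.
- have [le_P | /ltnW le_P] := leqP (P a) (P a').
    exact: (dvdn_or_dvdn_of_L_common a_gt0 a'_gt0 Lan La'n).
  by apply/or_comm; apply: (dvdn_or_dvdn_of_L_common a'_gt0 a_gt0 La'n Lan).
- by right; apply: (L_of_dvdn_common a_gt0 a'_gt0 Lan La'n).
- by left; apply: (L_of_dvdn_common a'_gt0 a_gt0 La'n Lan).
Qed.

Theorem lemma2p1 (a a' : nat) (ha : 1 < a) (ha' : 1 < a') :
  ((exists n, L a n /\ L a' n) -> L a' a \/ L a a') /\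
  ((forall n, ~ (L a n /\ L a' n)) \/
   (forall n, L a n -> L a' n) \/
   (forall n, L a' n -> L a n)).
Proof.
have a_gt0 : 0 < a by apply: ltnW.
have a'_gt0 : 0 < a' by apply: ltnW.
have common : (exists n, L a n /\ L a' n) -> L a' a \/ L a a'.
  by move=> [n [Lan La'n]]; apply: (L_common_comparable a_gt0 a'_gt0 Lan La'n).
split => //.
have [meet | disjoint] := Classical_Prop.classic (exists n, L a n /\ L a' n).
  case: (common meet) => [La'a | Laa']; right; [left | right] => n.
    exact: L_trans a'_gt0 La'a.
  exact: L_trans a_gt0 Laa'.
by left => n Ln; apply: disjoint; exists n.
Qed.
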